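(* Let $\mathcal A,\mathcal E\in\mathbb Q^{n\times n\times n_3}$, let $\operatorname{Ind}_{QT}(\mathcal A)=k$ and let $\mathcal A^D$ be the QT-Drazin inverse of $\mathcal A$. Suppose $\mathcal E=\mathcal A*_Q\mathcal A^D*_Q\mathcal E*_Q\mathcal A*_Q\mathcal A^D$, and set $\mathcal B=\mathcal A+\mathcal E$. If $\|\mathcal A^D*_Q\mathcal E\|_s<1$, then \begin{align*} \mathcal A*_Q\mathcal A^D&=\mathcal B*_Q\mathcal B^D,\\ \mathcal B^D-\mathcal A^D&=-\mathcal B^D*_Q\mathcal E*_Q\mathcal A^D=-\mathcal A^D*_Q\mathcal E*_Q\mathcal B^D,\\ \mathcal B^D&=(\mathcal I+\mathcal A^D*_Q\mathcal E)^{-1}*_Q\mathcal A^D=\mathcal A^D*_Q(\mathcal I+\mathcal E*_Q\mathcal A^D)^{-1}, \end{align*} where $\mathcal B^D$ is the QT-Drazin inverse of $\mathcal B$.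
   Context: $\mathbb Q$ denotes the real quaternions with the usual Hamilton multiplication and $|a|=\sqrt{a_0^2+a_1^2+a_2^2+a_3^2}$; $\mathbb C$ is identified with $\{a_0+a_1\mathbf i\}$. Every quaternion array $A=A_0+A_1\mathbf i+A_2\mathbf j+A_3\mathbf k$ (real $A_t$) is written uniquely as $A=A_{\mathbf d}+\mathbf jA_{\mathbf c}$ with $A_{\mathbf d}=A_0+A_1\mathbf i$, $A_{\mathbf c}=A_2-A_3\mathbf i$. For $\mathcal A\in\mathbb Q^{n_1\times n_2\times n_3}$, $\mathcal A^{(s)}=\mathcal A(:,:,s)$. For a complex tensor $\mathcal C$, $\mathtt{bcirc}(\mathcal C)$ is the block circulant matrix with $(p,q)$ block $\mathcal C^{(((p-q)\bmod n_3)+1)}$. $P_{n_3}$ is the permutation matrix with first row $e_1^T$ and $r$-th row $e_{n_3+2-r}^T$ ($r\ge2$). $\mathtt{bcirc_z}(\mathcal A)=\mathtt{bcirc}(\mathcal A_{\mathbf d})+\mathbf j\,\mathtt{bcirc}(\mathcal A_{\mathbf c})(P_{n_3}\otimes I_{n_2})$. $\mathtt{unfold}(\mathcal B)=[\mathcal B^{(1)};\dots;\mathcal B^{(n_3)}]$, $\mathtt{fold}$ its inverse; QT-product $\mathcal A*_Q\mathcal B=\mathtt{fold}(\mathtt{bcirc_z}(\mathcal A)\mathtt{unfold}(\mathcal B))$; identity tensor $\mathcal I$: first frontal slice $I_n$, others zero; $\mathcal A^0=\mathcal I$, $\mathcal A^{k+1}=\mathcal A*_Q\mathcal A^k$; $\mathcal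 M^{-1}$ is the tensor with $\mathcal M*_Q\mathcal M^{-1}=\mathcal M^{-1}*_Q\mathcal M=\mathcal I$. Conjugate transpose: for complex $\mathcal C$, $\mathcal C^*$ has frontal slices $(\mathcal C^{(1)})^*$ and $(\mathcal C^{(n_3+2-s)})^*$ ($s\ge2$); $\mathcal A^*$ is defined by $\mathtt{unfold}(\mathcal A^* )=\mathtt{unfold}(\mathcal A_{\mathbf d}^* )-(P_{n_3}\otimes I_{n_2})\mathtt{unfold}(\mathcal A_{\mathbf c}^* )\mathbf j$; $\mathcal U$ is unitary if $\mathcal U^**_Q\mathcal U=\mathcal U*_Q\mathcal U^*=\mathcal I$. QT-rank: given a QT-SVD $\mathcal A=\mathcal U*_Q\mathcal S*_Q\mathcal V^*$ ($\mathcal U,\mathcal V$ unitary, every frontal slice of $\mathcal S$ diagonal), $\operatorname{rank}_{QT}(\mathcal A)=\#\{i\le\min(n_1,n_2):\|\mathcal S(i,i,:)\|_F>0\}$. QT-index: least $k\ge0$ with $\operatorname{rank}_{QT}(\mathcal A^{k+1})=\operatorname{rank}_{QT}(\mathcal A^k)$. QT-Drazin inverse of $\mathcal A$ with $\operatorname{Ind}_{QT}(\mathcal A)=k$: $\mathcal X=\mathcal A^D$ with $\mathcal A^k*_Q\mathcal X*_Q\mathcal A=\mathcal A^k$, $\mathcal X*_Q\mathcal A*_Q\mathcal X=\mathcal X$, $\mathcal A*_Q\mathcal X=\mathcal X*_Q\mathcal A$. For a quaternion matrix $M$, $\|M\|_2=\max_{\|x\|=1}\|Mx\|$ with the Euclidean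 norm on quaternion vectors; QT-spectral norm $\|\mathcal A\|_s=\|\mathtt{bcirc_z}(\mathcal A)\|_2$. *)

From mathcomp Require Import all_boot all_order all_algebra.
From mathcomp Require Import classical_sets boolp reals.
Set Implicit Arguments. Unset Strict Implicit. Unset Printing Implicit Defensive.
Import Order.TTheory GRing.Theory Num.Theory.
Local Open Scope ring_scope.

Section QT.
Variable R : realType.

Definition quat := (R * R * R * R)%type.
Definition mkq (a0 a1 a2 a3 : R) : quat := (a0, a1, a2, a3).
Definition q0 (a : quat) : R := a.1.1.1.
Definition q1 (a : quat) : R := a.1.1.2.
Definition q2 (a : quat) : R := a.1.2.
Definition q3 (a : quat) : R := a.2.

Definition qmul (a b : quat) : quat :=
  mkq (q0 a * q0 b - q1 a * q1 b - q2 a * q2 b - q3 a * q3 b)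
      (q0 a * q1 b + q1 a * q0 b + q2 a * q3 b - q3 a * q2 b)
      (q0 a * q2 b - q1 a * q3 b + q2 a * q0 b + q3 a * q1 b)
      (q0 a * q3 b + q1 a * q2 b - q2 a * q1 b + q3 a * q0 b).
Definition qone : quat := mkq 1 0 0 0.
Definition qj : quat := mkq 0 0 1 0.
Definition qconj (a : quat) : quat := mkq (q0 a) (- q1 a) (- q2 a) (- q3 a).
Definition qabs (a : quat) : R :=
  Num.sqrt (q0 a ^+ 2 + q1 a ^+ 2 + q2 a ^+ 2 + q3 a ^+ 2).

Definition qmx (I J : finType) := I -> J -> quat.
Definition qmx_mul (I J K : finType) (M : qmx I J) (N : qmx J K) : qmx I K :=
  fun i k => \sum_(j : J) qmul (M i j) (N j k).
Definition qmx_add (I J : finType) (M N : qmx I J) : qmx I J :=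
  fun i j => M i j + N i j.
Definition qmx_sub (I J : finType) (M N : qmx I J) : qmx I J :=
  fun i j => M i j - N i j.
Definition qmx_lscale (I J : finType) (q : quat) (M : qmx I J) : qmx I J :=
  fun i j => qmul q (M i j).
Definition qmx_rscale (I J : finType) (M : qmx I J) (q : quat) : qmx I J :=
  fun i j => qmul (M i j) q.

Definition qvnorm (J : finType) (x : J -> quat) : R :=
  Num.sqrt (\sum_(j : J) qabs (x j) ^+ 2).
Definition qmx_apply (I J : finType) (M : qmx I J) (x : J -> quat) : I -> quat :=
  fun i => \sum_(j : J) qmul (M i j) (x j).
Definition qmx_norm2 (I J : finType) (M : qmx I J) : R :=
  sup [set qvnorm (qmx_apply M x) | x in [set x : J -> quat | qvnorm x = 1]].

Definition qtensor (n1 n2 n3 : nat) := 'I_n1 -> 'I_n2 -> 'I_n3 -> quat.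

(* frontal slice with a natural-number (0-based) index *)
Definition tslice (n3 : nat) (f : 'I_n3 -> quat) (s : nat) : quat :=
  match insub s with Some o => f o | None => 0 end.

(* A = A_d + j A_c with A_d = A0 + A1 i, A_c = A2 - A3 i (complex tensors,
   complex numbers embedded in the quaternions) *)
Definition tpart_d n1 n2 n3 (A : qtensor n1 n2 n3) : qtensor n1 n2 n3 :=
  fun i j s => mkq (q0 (A i j s)) (q1 (A i j s)) 0 0.
Definition tpart_c n1 n2 n3 (A : qtensor n1 n2 n3) : qtensor n1 n2 n3 :=
  fun i j s => mkq (q2 (A i j s)) (- q3 (A i j s)) 0 0.

(* Block matrices: row index (p, i) = i-th row of the p-th block row (0-based) *)
(* bcirc(C): (p,q) block is C^{((p-q) mod n3)+1}, i.e. 0-based slice (p-q) mod n3 *)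
Definition bcirc n1 n2 n3 (C : qtensor n1 n2 n3) :
  qmx ('I_n3 * 'I_n1)%type ('I_n3 * 'I_n2)%type :=
  fun pi qj => tslice (C pi.2 qj.2) ((pi.1 + n3 - qj.1) %% n3)%N.

(* P_{n3}: first row e_1^T, r-th row e_{n3+2-r}^T; 0-based: row r has its 1
   in column (n3 - r) mod n3 *)
Definition Pn (n3 : nat) : qmx 'I_n3 'I_n3 :=
  fun r c => if (c : nat) == ((n3 - r) %% n3)%N then qone else 0.
(* Kronecker product P_{n3} (x) I_m *)
Definition PkronI (n3 m : nat) : qmx ('I_n3 * 'I_m)%type ('I_n3 * 'I_m)%type :=
  fun ra cb => if ra.2 == cb.2 then Pn ra.1 cb.1 else 0.

Definition bcirc_z n1 n2 n3 (A : qtensor n1 n2 n3) :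
  qmx ('I_n3 * 'I_n1)%type ('I_n3 * 'I_n2)%type :=
  qmx_add (bcirc (tpart_d A))
          (qmx_lscale qj (qmx_mul (bcirc (tpart_c A)) (@PkronI n3 n2))).

Definition tunfold n1 n2 n3 (B : qtensor n1 n2 n3) : qmx ('I_n3 * 'I_n1)%type 'I_n2 :=
  fun si j => B si.2 j si.1.
Definition tfold n1 n2 n3 (M : qmx ('I_n3 * 'I_n1)%type 'I_n2) : qtensor n1 n2 n3 :=
  fun i j s => M (s, i) j.

Definition qtprod n1 n2 n3 n4 (A : qtensor n1 n2 n3) (B : qtensor n2 n4 n3) :
  qtensor n1 n4 n3 := tfold (qmx_mul (bcirc_z A) (tunfold B)).

Definition qtadd n1 n2 n3 (A B : qtensor n1 n2 n3) : qtensor n1 n2 n3 :=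
  fun i j s => A i j s + B i j s.
Definition qtsub n1 n2 n3 (A B : qtensor n1 n2 n3) : qtensor n1 n2 n3 :=
  fun i j s => A i j s - B i j s.
Definition qtopp n1 n2 n3 (A : qtensor n1 n2 n3) : qtensor n1 n2 n3 :=
  fun i j s => - A i j s.

Definition qtid n n3 : qtensor n n n3 :=
  fun i j s => if ((s : nat) == 0%N) && (i == j) then qone else 0.

Fixpoint qtpow n n3 (A : qtensor n n n3) (k : nat) : qtensor n n n3 :=
  match k with
  | 0%N => @qtid n n3
  | k'.+1 => qtprod A (qtpow A k')
  end.

Definition qtinverse n n3 (M X : qtensor n n n3) : Prop :=
  qtprod M X = @qtid n n3 /\ qtprod X M = @qtid n n3.

(* conjugate transpose of a complex tensor: slices (C^(1))^*, (C^(n3+2-s))^* *)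
Definition ctconj n1 n2 n3 (C : qtensor n1 n2 n3) : qtensor n2 n1 n3 :=
  fun j i s => qconj (tslice (C i j) ((n3 - s) %% n3)%N).

(* unfold(A^H) = unfold(A_d^H) - (P_{n3} (x) I_{n2}) unfold(A_c^H) j,  ^H = conjugate transpose *)
Definition qtconj n1 n2 n3 (A : qtensor n1 n2 n3) : qtensor n2 n1 n3 :=
  tfold (qmx_sub (tunfold (ctconj (tpart_d A)))
                 (qmx_rscale (qmx_mul (@PkronI n3 n2) (tunfold (ctconj (tpart_c A))))
                             qj)).

Definition qtunitary n n3 (U : qtensor n n n3) : Prop :=
  qtprod (qtconj U) U = @qtid n n3 /\ qtprod U (qtconj U) = @qtid n n3.

Definition tube_frob n1 n2 n3 (S : qtensor n1 n2 n3) (i : 'I_n1) (j : 'I_n2) : R :=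
  Num.sqrt (\sum_(s : 'I_n3) qabs (S i j s) ^+ 2).

Definition is_QTrank n1 n2 n3 (A : qtensor n1 n2 n3) (r : nat) : Prop :=
  exists (U : qtensor n1 n1 n3) (S : qtensor n1 n2 n3) (V : qtensor n2 n2 n3),
    [/\ qtunitary U, qtunitary V,
        (forall (i : 'I_n1) (j : 'I_n2) (s : 'I_n3), (i : nat) != (j : nat) -> S i j s = 0),
        A = qtprod (qtprod U S) (qtconj V) &
        r = #|[set i : 'I_n1 | [exists j : 'I_n2,
                 ((i : nat) == j) && (tube_frob S i j > 0)]]|].
(* note: i = j < n2 and i < n1 together mean i < min(n1, n2) *)

Definition rankQT n1 n2 n3 (A : qtensor n1 n2 n3) : nat :=
  xget 0%N [set r | is_QTrank A r].

Definition QTindex n n3 (A : qtensor n n n3) (k : nat) : Prop :=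
  rankQT (qtpow A k.+1) = rankQT (qtpow A k) /\
  forall j, (j < k)%N -> rankQT (qtpow A j.+1) <> rankQT (qtpow A j).

Definition QTdrazin n n3 (A : qtensor n n n3) (k : nat) (X : qtensor n n n3) : Prop :=
  [/\ qtprod (qtprod (qtpow A k) X) A = qtpow A k,
      qtprod (qtprod X A) X = X &
      qtprod A X = qtprod X A].

Definition qtnorm_s n1 n2 n3 (A : qtensor n1 n2 n3) : R := qmx_norm2 (bcirc_z A).

End QT.

Declare Scope qt_scope.
Delimit Scope qt_scope with QT.
Notation "A *Q B" := (qtprod A B) (at level 40, left associativity) : qt_scope.
Notation "A +Q B" := (qtadd A B) (at level 50, left associativity) : qt_scope.
Notation "A -Q B" := (qtsub A B) (at level 50, left associativity) : qt_scope.

(* Square quaternion tensors form a ring under the QT-product, because bcirc_z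
   turns the QT-product into a matrix product; so the statement is an instance of
   a perturbation result for Drazin inverses in an arbitrary ring.  With
   P = A A^D, the hypothesis E = P E P gives A + E = A (I + A^D E).  If M inverts
   I + A^D E, then M A^D satisfies the Drazin equations for A + E: both products
   with A + E equal P, and (A + E)^k agrees with A^k on the range of I - P, where
   A^k vanishes.  By uniqueness of Drazin inverses B^D = M A^D, and the displayed
   identities follow by ring algebra and Jacobson's lemma (I + xy invertible iff
   I + yx is).  Finally ||A^D E||_s < 1 makes X |-> (I + A^D E) X injective, and
   an injective linear map of the finite-dimensional space of tensors is onto. *)

From HB Require Import structures.
From mathcomp Require Import all_boot all_order all_algebra.
From mathcomp Require Import classical_sets boolp reals ring lra.
Set Implicit Arguments. Unset Strict Implicit. Unset Printing Implicit Defensive.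
Import Order.TTheory GRing.Theory Num.Theory.
Local Open Scope ring_scope.

Lemma quatP (R : realType) (a b : quat R) :
  q0 a = q0 b -> q1 a = q1 b -> q2 a = q2 b -> q3 a = q3 b -> a = b.
Proof.
case: a => [[[? ?] ?] ?]; case: b => [[[? ?] ?] ?].
by rewrite /q0 /q1 /q2 /q3 /= => -> -> -> ->.
Qed.

Section Quaternion.
Variable R : realType.
Implicit Types (a b c : quat R) (x : R).

(* [qd a + qjc a] is the splitting [a = a_d + j a_c] of the paper. *)
Definition qd a : quat R := mkq (q0 a) (q1 a) 0 0.
Definition qjc a : quat R := mkq 0 0 (q2 a) (q3 a).

Definition qscale x a : quat R := mkq (x * q0 a) (x * q1 a) (x * q2 a) (x * q3 a).

Ltac quat_ring :=
  apply: quatP; rewrite /qd /qjc /qscale /qmul /qone /qj /mkq /q0 /q1 /q2 /q3 /=; ring.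

Lemma qmulA a b c : qmul (qmul a b) c = qmul a (qmul b c). Proof. quat_ring. Qed.
Lemma qmulDl a b c : qmul (a + b) c = qmul a c + qmul b c. Proof. quat_ring. Qed.
Lemma qmulDr a b c : qmul a (b + c) = qmul a b + qmul a c. Proof. quat_ring. Qed.
Lemma qmul0r a : qmul 0 a = 0. Proof. quat_ring. Qed.
Lemma qmulr0 a : qmul a 0 = 0. Proof. quat_ring. Qed.
Lemma qmul1r a : qmul (qone R) a = a. Proof. quat_ring. Qed.
Lemma qmulr1 a : qmul a (qone R) = a. Proof. quat_ring. Qed.

Lemma qmul_suml (I : Type) (r : seq I) (P : pred I) (F : I -> quat R) c :
  qmul (\sum_(i <- r | P i) F i) c = \sum_(i <- r | P i) qmul (F i) c.
Proof. exact: (big_morph (fun a => qmul a c) (fun a b => qmulDl a b c) (qmul0r c)). Qed.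

Lemma qmul_sumr (I : Type) (r : seq I) (P : pred I) (F : I -> quat R) c :
  qmul c (\sum_(i <- r | P i) F i) = \sum_(i <- r | P i) qmul c (F i).
Proof. exact: (big_morph (qmul c) (qmulDr c) (qmulr0 c)). Qed.

Lemma qd_add_qjc a : qd a + qjc a = a. Proof. quat_ring. Qed.
Lemma qdD a b : qd (a + b) = qd a + qd b. Proof. quat_ring. Qed.
Lemma qjcD a b : qjc (a + b) = qjc a + qjc b. Proof. quat_ring. Qed.
Lemma qd0 : qd 0 = 0. Proof. quat_ring. Qed.
Lemma qjc0 : qjc 0 = 0. Proof. quat_ring. Qed.
Lemma qd1 : qd (qone R) = qone R. Proof. quat_ring. Qed.
Lemma qjc1 : qjc (qone R) = 0. Proof. quat_ring. Qed.
Lemma qd_qd_qjc a b : qd (qd a + qjc b) = qd a. Proof. quat_ring. Qed.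
Lemma qjc_qd_qjc a b : qjc (qd a + qjc b) = qjc b. Proof. quat_ring. Qed.
Lemma qj_cpart a : qmul (qj R) (mkq (q2 a) (- q3 a) 0 0) = qjc a.
Proof. quat_ring. Qed.

(* [j c = conj(c) j] for complex [c]. *)
Lemma qdM a b : qd (qmul a b) = qmul (qd a) (qd b) + qmul (qjc a) (qjc b).
Proof. quat_ring. Qed.
Lemma qjcM a b : qjc (qmul a b) = qmul (qd a) (qjc b) + qmul (qjc a) (qd b).
Proof. quat_ring. Qed.

Lemma qd_sum (I : Type) (r : seq I) (P : pred I) (F : I -> quat R) :
  qd (\sum_(i <- r | P i) F i) = \sum_(i <- r | P i) qd (F i).
Proof. exact: (big_morph qd qdD qd0). Qed.
Lemma qjc_sum (I : Type) (r : seq I) (P : pred I) (F : I -> quat R) :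
  qjc (\sum_(i <- r | P i) F i) = \sum_(i <- r | P i) qjc (F i).
Proof. exact: (big_morph qjc qjcD qjc0). Qed.

Lemma qscaleD x a b : qscale x (a + b) = qscale x a + qscale x b.
Proof. quat_ring. Qed.
Lemma qscale0 x : qscale x 0 = 0. Proof. quat_ring. Qed.
Lemma qmul_scaler x a b : qmul a (qscale x b) = qscale x (qmul a b).
Proof. quat_ring. Qed.

Lemma qscale_sum x (I : Type) (r : seq I) (P : pred I) (F : I -> quat R) :
  qscale x (\sum_(i <- r | P i) F i) = \sum_(i <- r | P i) qscale x (F i).
Proof. exact: (big_morph (qscale x) (qscaleD x) (qscale0 x)). Qed.

Definition qsqnorm a := q0 a ^+ 2 + q1 a ^+ 2 + q2 a ^+ 2 + q3 a ^+ 2.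

Lemma qsqnorm_ge0 a : 0 <= qsqnorm a.
Proof. by rewrite /qsqnorm !addr_ge0 ?sqr_ge0. Qed.

Lemma qabs_ge0 a : 0 <= qabs a. Proof. exact: sqrtr_ge0. Qed.

Lemma qabs_sqr a : qabs a ^+ 2 = qsqnorm a.
Proof. by rewrite sqr_sqrtr // qsqnorm_ge0. Qed.

Lemma qabs_eq0 a : qabs a = 0 -> a = 0.
Proof.
move/eqP; rewrite sqrtr_eq0 => le0.
have [[[s0 s1] s2] s3] :=
  (sqr_ge0 (q0 a), sqr_ge0 (q1 a), sqr_ge0 (q2 a), sqr_ge0 (q3 a)).
by apply: quatP; apply/eqP; rewrite -sqrf_eq0 eq_le sqr_ge0 andbT; lra.
Qed.

(* Euler's four-square identity. *)
Lemma qabs_mul a b : qabs (qmul a b) = qabs a * qabs b.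
Proof.
rewrite /qabs -sqrtrM ?qsqnorm_ge0 //; congr Num.sqrt.
rewrite /qmul /mkq /q0 /q1 /q2 /q3 /=; ring.
Qed.

Lemma qabs_scale x a : qabs (qscale x a) = `|x| * qabs a.
Proof.
rewrite /qabs -sqrtr_sqr -sqrtrM ?sqr_ge0 //; congr Num.sqrt.
rewrite /qscale /mkq /q0 /q1 /q2 /q3 /=; ring.
Qed.

Lemma qabs_opp a : qabs (- a) = qabs a.
Proof. by rewrite /qabs /q0 /q1 /q2 /q3 /= !sqrrN. Qed.

Lemma qabs_add_le a b : qabs (a + b) <= qabs a + qabs b.
Proof.
pose d := q0 a * q0 b + q1 a * q1 b + q2 a * q2 b + q3 a * q3 b.
have sqnormD : qsqnorm (a + b) = qsqnorm a + qsqnorm b + 2 * d.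
  by rewrite /qsqnorm /d /q0 /q1 /q2 /q3 /=; ring.
have cauchy_schwarz : d ^+ 2 <= qsqnorm a * qsqnorm b.
  rewrite -subr_ge0 (_ : _ - _ =
      (q0 a * q1 b - q1 a * q0 b) ^+ 2 + (q0 a * q2 b - q2 a * q0 b) ^+ 2
    + (q0 a * q3 b - q3 a * q0 b) ^+ 2 + (q1 a * q2 b - q2 a * q1 b) ^+ 2
    + (q1 a * q3 b - q3 a * q1 b) ^+ 2 + (q2 a * q3 b - q3 a * q2 b) ^+ 2).
    by rewrite !addr_ge0 ?sqr_ge0.
  by rewrite /qsqnorm /d; ring.
have d_le : d <= qabs a * qabs b.
  rewrite (le_trans (ler_norm d)) // -sqrtr_sqr /qabs -sqrtrM ?qsqnorm_ge0 //.
  by rewrite ler_sqrt // mulr_ge0 ?qsqnorm_ge0.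
have qab_ge0 := addr_ge0 (qabs_ge0 a) (qabs_ge0 b).
rewrite -(ger0_norm qab_ge0) -sqrtr_sqr [qabs (a + b)]/qabs -/(qsqnorm (a + b)).
rewrite ler_sqrt ?sqr_ge0 // sqnormD -!qabs_sqr.
nra.
Qed.

Lemma qabs_sum_le (I : Type) (r : seq I) (P : pred I) (F : I -> quat R) :
  qabs (\sum_(i <- r | P i) F i) <= \sum_(i <- r | P i) qabs (F i).
Proof.
elim/big_rec2: _ => [|i y1 y2 _ le_y].
  by rewrite /qabs /= expr0n /= !addr0 sqrtr0.
by apply: le_trans (qabs_add_le _ _) _; rewrite lerD2l.
Qed.

End Quaternion.

Section QMatrix.
Variable R : realType.
Implicit Types I J K L : finType.

Definition qmx_id I : qmx R I I := fun u v => if u == v then qone R else 0.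

Lemma qmx_mulA I J K L (M : qmx R I J) (N : qmx R J K) (P : qmx R K L) :
  qmx_mul (qmx_mul M N) P = qmx_mul M (qmx_mul N P).
Proof.
apply: funext => i; apply: funext => l; rewrite /qmx_mul.
under eq_bigr => k _ do rewrite qmul_suml.
under [RHS]eq_bigr => j _ do rewrite qmul_sumr.
by rewrite exchange_big; apply: eq_bigr => j _; apply: eq_bigr => k _; rewrite qmulA.
Qed.

Lemma qmx_mul1 I J (M : qmx R I J) : qmx_mul (@qmx_id I) M = M.
Proof.
apply: funext => i; apply: funext => j; rewrite /qmx_mul (bigD1 i) //= big1 ?addr0.
  by rewrite /qmx_id eqxx qmul1r.
by move=> u /negbTE ne_ui; rewrite /qmx_id eq_sym ne_ui qmul0r.
Qed.

End QMatrix.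

Section QVectorNorm.
Variables (R : realType) (J : finType).
Implicit Types (x : J -> quat R) (c : R).

Lemma qabs_le_qvnorm x j : qabs (x j) <= qvnorm x.
Proof.
have sq_ge0 k : 0 <= qabs (x k) ^+ 2 by apply: sqr_ge0.
rewrite -(ger0_norm (qabs_ge0 (x j))) -sqrtr_sqr ler_sqrt ?sumr_ge0 //.
by rewrite (bigD1 j) //= lerDl; apply: sumr_ge0 => k _.
Qed.

Lemma qvnorm_eq0 x : qvnorm x = 0 -> forall j, x j = 0.
Proof.
move=> x0 j; apply: qabs_eq0; apply/eqP; rewrite eq_le qabs_ge0 andbT -x0.
exact: qabs_le_qvnorm.
Qed.

Lemma qvnorm_scale c x : qvnorm (fun j => qscale c (x j)) = `|c| * qvnorm x.
Proof.
rewrite /qvnorm -sqrtr_sqr -sqrtrM ?sqr_ge0 // mulr_sumr; congr Num.sqrt.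
by apply: eq_bigr => j _; rewrite qabs_scale exprMn real_normK ?num_real.
Qed.

Lemma qvnorm_opp x : qvnorm (fun j => - x j) = qvnorm x.
Proof. by rewrite /qvnorm; under eq_bigr => j _ do rewrite qabs_opp. Qed.

Lemma qmx_apply_scale (I : finType) (M : qmx R I J) c x :
  qmx_apply M (fun j => qscale c (x j)) = fun i => qscale c (qmx_apply M x i).
Proof.
apply: funext => i; rewrite /qmx_apply qscale_sum.
by apply: eq_bigr => j _; rewrite qmul_scaler.
Qed.

Lemma qmx_apply_bounded (I : finType) (M : qmx R I J) :
  exists C, forall x, qvnorm x = 1 -> qvnorm (qmx_apply M x) <= C.
Proof.
exists (Num.sqrt (\sum_i (\sum_j qabs (M i j)) ^+ 2)) => x x1.
rewrite ler_sqrt; last by apply: sumr_ge0 => i _; apply: sqr_ge0.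
apply: ler_sum => i _.
have C_ge0 : 0 <= \sum_j qabs (M i j) by apply: sumr_ge0 => j _; apply: qabs_ge0.
rewrite ler_sqr ?nnegrE ?qabs_ge0 //.
apply: le_trans (qabs_sum_le _ _ _) _; apply: ler_sum => j _.
by rewrite qabs_mul ler_piMr ?qabs_ge0 // -x1 qabs_le_qvnorm.
Qed.

Lemma qmx_norm2_lt1_eq0 (M : qmx R J J) x :
  qmx_norm2 M < 1 -> (forall j, x j + qmx_apply M x j = 0) -> forall j, x j = 0.
Proof.
move=> M_lt1 x_fix; case: (eqVneq (qvnorm x) 0) => [/qvnorm_eq0 //|x_neq0].
have x_gt0 : 0 < qvnorm x by rewrite lt_def x_neq0 sqrtr_ge0.
pose w j := qscale (qvnorm x)^-1 (x j).
have w1 : qvnorm w = 1 by rewrite qvnorm_scale ger0_norm ?invr_ge0 ?ltW // mulVf.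
have Mx : qmx_apply M x = fun j => - x j.
  by apply: funext => j; apply/eqP; rewrite -addr_eq0 addrC x_fix.
have Mw1 : qvnorm (qmx_apply M w) = 1.
  rewrite qmx_apply_scale Mx qvnorm_scale qvnorm_opp.
  by rewrite ger0_norm ?invr_ge0 ?ltW // mulVf.
have [C MC] := qmx_apply_bounded M.
have sup_ge1 : 1 <= qmx_norm2 M.
  apply: sup_upper_bound; last by exists w.
  by split; [exists 1, w | exists C => _ [y y1 <-]; apply: MC].
by move: M_lt1; rewrite ltNge sup_ge1.
Qed.

End QVectorNorm.

(** * The ring of square quaternion tensors *)

(* With [n3 = m.+1] the slice index ['I_m.+1] is the group Z/n3, in which the
   index arithmetic of [bcirc] and [PkronI] takes place; [n3 = 0] is trivial. *)
Section QTensorRing.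
Variables (R : realType) (n m : nat).
Local Notation quat := (quat R).
Local Notation qt := (qtensor R n n m.+1).

Lemma qtensorP (A B : qt) : (forall i j s, A i j s = B i j s) -> A = B.
Proof. by move=> eqAB; do 3!apply: funext => ?; apply: eqAB. Qed.

Lemma tslice_ord (f : 'I_m.+1 -> quat) (s : 'I_m.+1) : tslice f s = f s.
Proof. by rewrite /tslice valK. Qed.

Lemma bcirc_index (p q : 'I_m.+1) : ((p + m.+1 - q) %% m.+1)%N = p - q :> nat.
Proof. by rewrite /= modnDmr addnBA // ltnW. Qed.

Lemma PkronIE (r q : 'I_m.+1) (l j : 'I_n) :
  PkronI R (r, l) (q, j) = if (r == - q) && (l == j) then qone R else 0.
Proof.
rewrite /PkronI /Pn /=; case: (l == j); rewrite ?andbT ?andbF //.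
have -> : ((q : nat) == (m.+1 - r) %% m.+1)%N = (q == - r) by [].
by rewrite eq_sym eqr_oppLR.
Qed.

(* The reflection [PkronI] turns the circulant index [p - q] of the c-part
   into [p + q]. *)
Lemma bcirc_zE (A : qt) (u v : 'I_m.+1 * 'I_n) :
  bcirc_z A u v = qd (A u.2 v.2 (u.1 - v.1)) + qjc (A u.2 v.2 (u.1 + v.1)).
Proof.
rewrite /bcirc_z /qmx_add /qmx_lscale /qmx_mul /bcirc.
rewrite (bcirc_index u.1 v.1) tslice_ord.
case: v => q j; congr (_ + _).
rewrite (bigD1 (- q, j)) // PkronIE (bcirc_index _ (- q)) tslice_ord big1 /=.
  by rewrite !eqxx qmulr1 addr0 opprK; apply: qj_cpart.
move=> [r l] /= ne_rl; rewrite PkronIE.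
case: ifP => [/andP[/eqP rq /eqP lj]|_]; last by rewrite qmulr0.
by rewrite rq lj eqxx in ne_rl.
Qed.

Lemma tfoldK (M : qmx R ('I_m.+1 * 'I_n)%type 'I_n) : tunfold (tfold M : qt) = M.
Proof. by apply: funext => -[s i]; apply: funext. Qed.

Lemma bcirc_zM (A B : qt) : bcirc_z (qtprod A B) = qmx_mul (bcirc_z A) (bcirc_z B).
Proof.
apply: funext => -[p i]; apply: funext => -[r l].
rewrite bcirc_zE /qtprod /tfold /qmx_mul /tunfold qd_sum qjc_sum.
under eq_bigr => x _ do rewrite bcirc_zE qdM qd_qd_qjc qjc_qd_qjc.
under [X in _ + X]eq_bigr => x _ do rewrite bcirc_zE qjcM qd_qd_qjc qjc_qd_qjc.
under [RHS]eq_bigr => x _ do rewrite !bcirc_zE qmulDl !qmulDr.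
rewrite !big_split /= [LHS]addrACA [X in _ = _ + X]addrC.
have shift_inj (t : 'I_m.+1) : injective (fun x : 'I_m.+1 * 'I_n => (x.1 + t, x.2)).
  by apply: (can_inj (g := fun x => (x.1 - t, x.2))) => -[a b]; rewrite /= addrK.
congr (_ + _ + (_ + _)).
- rewrite (reindex_inj (shift_inj (- r))); apply: eq_bigr => x _ /=.
  by rewrite opprD opprK addrACA addNr addr0.
- rewrite (reindex_inj (shift_inj r)); apply: eq_bigr => x _ /=.
  by rewrite opprD addrACA subrr addr0.
- rewrite (reindex_inj (shift_inj r)); apply: eq_bigr => x _ /=.
  by rewrite addrACA addNr addr0.
- rewrite (reindex_inj (shift_inj (- r))); apply: eq_bigr => x _ /=.
  by rewrite addrACA subrr addr0.
Qed.

Lemma qtprodA (A B C : qt) : qtprod (qtprod A B) C = qtprod A (qtprod B C).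
Proof. by rewrite {1}/qtprod bcirc_zM qmx_mulA /qtprod tfoldK. Qed.

Lemma bcirc_z_id : bcirc_z (@qtid R n m.+1) = @qmx_id R _.
Proof.
apply: funext => -[p i]; apply: funext => -[q j].
have sub_eq0 : (val (p - q) == 0%N) = (p == q) by rewrite -subr_eq0.
rewrite bcirc_zE /qmx_id /qtid /= sub_eq0 xpair_eqE.
by rewrite (fun_if (@qjc R)) qjc1 qjc0 if_same addr0 (fun_if (@qd R)) qd1 qd0.
Qed.

Lemma qtprod1 (A : qt) : qtprod (@qtid R n m.+1) A = A.
Proof. by rewrite /qtprod bcirc_z_id qmx_mul1. Qed.

Lemma qtprodr1 (A : qt) : qtprod A (@qtid R n m.+1) = A.
Proof.
apply: qtensorP => i l s.
rewrite /qtprod /tfold /qmx_mul (bigD1 (0, l)) //= big1 ?addr0.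
  by rewrite /tunfold /qtid !eqxx qmulr1 bcirc_zE subr0 addr0 qd_add_qjc.
move=> [q j] /= ne_ql; rewrite /tunfold /qtid /=.
case: ifP => [/andP[q0 /eqP jl]|_]; last by rewrite qmulr0.
by move: ne_ql; rewrite xpair_eqE jl eqxx andbT -val_eqE q0.
Qed.

Lemma qtprodDl (A B C : qt) :
  qtprod (qtadd A B) C = qtadd (qtprod A C) (qtprod B C).
Proof.
apply: qtensorP => i l s; rewrite /qtadd /qtprod /tfold /qmx_mul -big_split.
by apply: eq_bigr => -[q j] _; rewrite !bcirc_zE /= qdD qjcD addrACA -qmulDl.
Qed.

Lemma qtprodDr (A B C : qt) :
  qtprod A (qtadd B C) = qtadd (qtprod A B) (qtprod A C).
Proof.
apply: qtensorP => i l s; rewrite /qtadd /qtprod /tfold /qmx_mul -big_split.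
by apply: eq_bigr => x _; rewrite qmulDr.
Qed.

End QTensorRing.

Section QTensorRingStructure.
Variables (R : realType) (n m : nat).

Definition sqtensor := qtensor R n n m.+1.
HB.instance Definition _ := Choice.on sqtensor.

Let qtzero : sqtensor := fun _ _ _ => 0.

Lemma qtaddA : associative (@qtadd R n n m.+1).
Proof. by move=> A B C; apply: qtensorP => i j s; rewrite /qtadd addrA. Qed.
Lemma qtaddC : commutative (@qtadd R n n m.+1).
Proof. by move=> A B; apply: qtensorP => i j s; rewrite /qtadd addrC. Qed.
Lemma qtadd0 : left_id qtzero (@qtadd R n n m.+1).
Proof. by move=> A; apply: qtensorP => i j s; rewrite /qtadd add0r. Qed.
Lemma qtaddN : left_inverse qtzero (@qtopp R n n m.+1) (@qtadd R n n m.+1).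
Proof. by move=> A; apply: qtensorP => i j s; rewrite /qtadd /qtopp addNr. Qed.

HB.instance Definition _ := GRing.isPzRing.Build sqtensor
  qtaddA qtaddC qtadd0 qtaddN (fun A B C => esym (qtprodA A B C))
  (@qtprod1 R n m) (@qtprodr1 R n m) (@qtprodDl R n m) (@qtprodDr R n m).

Lemma qtpowE (A : sqtensor) k : qtpow A k = A ^+ k.
Proof. by elim: k => [|k IHk] //=; rewrite exprS IHk. Qed.

End QTensorRingStructure.

(** * Drazin inverses in a ring *)

Section DrazinInverse.
Variable Rg : pzRingType.
Implicit Types a e x y u v : Rg.

Definition is_inverse u v := u * v = 1 /\ v * u = 1.

Definition drazin_inverse (k : nat) a x :=
  [/\ a ^+ k * x * a = a ^+ k, x * a * x = x & a * x = x * a].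

Lemma is_inverse_1addMC x y v :
  is_inverse (1 + x * y) v -> is_inverse (1 + y * x) (1 - y * v * x).
Proof.
case=> [rinv linv].
have yC : (1 + y * x) * y = y * (1 + x * y).
  by rewrite mulrDl mulrDr mul1r mulr1 mulrA.
have xC : x * (1 + y * x) = (1 + x * y) * x.
  by rewrite mulrDl mulrDr mul1r mulr1 mulrA.
split.
- by rewrite mulrBr mulr1 !mulrA yC -(mulrA y (1 + x * y)) rinv mulr1 addrK.
- by rewrite mulrBl mul1r -!mulrA xC (mulrA v) linv mul1r addrK.
Qed.

Lemma is_inverse_1addM_push x y v :
  is_inverse (1 + x * y) v -> v * x = x * (1 - y * v * x).
Proof.
case=> [rinv _]; have v_eq : v = 1 - x * y * v by rewrite -rinv mulrDl mul1r addrK.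
by rewrite mulrBr mulr1 !mulrA {1}v_eq mulrBl mul1r.
Qed.

Section Properties.
Variables (k : nat) (a x : Rg).
Hypothesis ax : drazin_inverse k a x.

Lemma drazin_inverseW j : drazin_inverse (j + k) a x.
Proof.
case: ax => hk hx hc; split=> //.
by rewrite exprD -!mulrA (mulrA (a ^+ k)) hk.
Qed.

Lemma drazin_expr_mul j : x = a ^+ j * x ^+ j.+1.
Proof.
case: ax => _ hx hc; have ax2 : a * x ^+ 2 = x by rewrite expr2 mulrA hc.
elim: j => [|j IHj]; first by rewrite mul1r expr1.
by rewrite exprSr -mulrA -add2n exprD (mulrA a) ax2 -exprS.
Qed.

Lemma drazin_mul_expr j : x = x ^+ j.+1 * a ^+ j.
Proof.
by rewrite {1}(drazin_expr_mul j); apply: commrX; apply/commr_sym/commrX; case: ax.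
Qed.

End Properties.

Lemma drazin_inverse_uniq k1 k2 a x y :
  drazin_inverse k1 a x -> drazin_inverse k2 a y -> x = y.
Proof.
move=> ax ay; set m := (k1 + k2)%N.
have [axm _ cax] := drazin_inverseW ax k2.
have [aym _ cay] := drazin_inverseW ay k1.
rewrite addnC -/m in axm.
have x_eq : x = y * a * x.
  rewrite {1}(drazin_expr_mul ax m) -{1}aym -(commrX m (commr_sym cay)).
  rewrite -(mulrA y) -exprSr exprS !mulrA -(mulrA _ (a ^+ m)).
  by rewrite -(drazin_expr_mul ax m).
have y_eq : y = y * a * x.
  rewrite {1}(drazin_mul_expr ay m) -{1}axm -mulrA -cax mulrA.
  by rewrite -(drazin_mul_expr ay m) mulrA.
by rewrite x_eq -y_eq.
Qed.

End DrazinInverse.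

Lemma expr_add_mulr_annihilated (Rg : pzRingType) (a e q : Rg) j :
  a * q = q * a -> e * q = 0 -> (a + e) ^+ j * q = a ^+ j * q.
Proof.
move=> aq eq0; elim: j => [|j IHj]; first by rewrite !expr0.
by rewrite !exprSr -!mulrA mulrDl eq0 addr0 aq !mulrA IHj.
Qed.

Section DrazinPerturbation.
Variables (Rg : pzRingType) (k : nat) (a e ad v : Rg).
Hypotheses (a_ad : drazin_inverse k a ad) (e_eq : e = a * ad * e * a * ad)
  (inv_v : is_inverse (1 + ad * e) v).

Let p := a * ad.

Lemma drazin_projector_mulr : p * ad = ad.
Proof. by case: a_ad => _ ad_a_ad ca; rewrite /p ca. Qed.

Lemma drazin_projector_idem : p * p = p.
Proof. by case: a_ad => _ ad_a_ad _; rewrite /p -mulrA (mulrA ad) ad_a_ad. Qed.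

Lemma perturbation_projector : p * e = e /\ e * p = e.
Proof.
have e_pep : e = p * e * p by rewrite {1}e_eq -(mulrA _ a ad).
split; rewrite e_pep.
- by rewrite (mulrA p (p * e)) (mulrA p p) drazin_projector_idem.
- by rewrite -(mulrA (p * e) p) drazin_projector_idem.
Qed.

Lemma perturbation_factor : a + e = a * (1 + ad * e).
Proof. by rewrite mulrDr mulr1 mulrA (perturbation_projector).1. Qed.

Lemma perturbation_projector_comm : p * v = v * p.
Proof.
have [pe ep] := perturbation_projector; case: inv_v => rinv linv.
have pC : p * (1 + ad * e) = (1 + ad * e) * p.
  by rewrite mulrDr mulrDl mulr1 mul1r mulrA drazin_projector_mulr -mulrA ep.
by rewrite -[p * v]mul1r -linv -mulrA (mulrA _ p) -pC -!mulrA rinv mulr1.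
Qed.

Lemma perturbed_mulr_drazin : (a + e) * (v * ad) = p.
Proof.
by case: inv_v => rinv _; rewrite perturbation_factor -mulrA (mulrA _ v) rinv mul1r.
Qed.

Lemma perturbed_mull_drazin : v * ad * (a + e) = p.
Proof.
rewrite -mulrA.
case: a_ad inv_v => _ _ ca [_ linv]; have [_ ep] := perturbation_projector.
have -> : ad * (a + e) = (1 + ad * e) * p.
  by rewrite mulrDr mulrDl mul1r /p -ca -mulrA ep.
by rewrite mulrA linv mul1r.
Qed.

Lemma perturbed_drazin_inverse : drazin_inverse k (a + e) (v * ad).
Proof.
have [_ ep] := perturbation_projector; case: a_ad => a_k _ ca.
split.
- have ap : a * p = p * a by rewrite /p -mulrA -ca.
  have aq : a * (1 - p) = (1 - p) * a by rewrite mulrBr mulrBl mulr1 mul1r ap.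
  have eq0 : e * (1 - p) = 0 by rewrite mulrBr mulr1 ep subrr.
  rewrite -mulrA perturbed_mull_drazin; apply/eqP; rewrite eq_sym -subr_eq0.
  rewrite -[X in X - _]mulr1 -mulrBr expr_add_mulr_annihilated //.
  by rewrite mulrBr mulr1 /p ca mulrA a_k subrr.
- by rewrite perturbed_mull_drazin mulrA perturbation_projector_comm -mulrA
    drazin_projector_mulr.
- by rewrite perturbed_mulr_drazin perturbed_mull_drazin.
Qed.

Theorem drazin_inverse_perturbation kB bd : drazin_inverse kB (a + e) bd ->
  [/\ a * ad = (a + e) * bd, bd - ad = - (bd * e * ad), bd - ad = - (ad * e * bd),
      bd = v * ad & bd = ad * (1 - e * v * ad)].
Proof.
move=> a_bd.
have bd_eq : bd = v * ad := drazin_inverse_uniq a_bd perturbed_drazin_inverse.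
have bd_eq' : bd = ad * (1 - e * v * ad) by rewrite bd_eq (is_inverse_1addM_push inv_v).
split=> //.
- by rewrite bd_eq perturbed_mulr_drazin.
- case: inv_v => _ linv.
  rewrite bd_eq -[X in _ - X = _]mul1r -linv mulrDr mulr1 mulrDl opprD addrA subrr.
  by rewrite add0r !mulrA.
- have [rinv' _] := is_inverse_1addMC inv_v; set w := 1 - e * v * ad in bd_eq' rinv' *.
  rewrite bd_eq' -[X in _ - X = _]mulr1 -rinv' mulrDl mul1r mulrDr opprD addrA subrr.
  by rewrite add0r !mulrA.
Qed.

End DrazinPerturbation.

(** * Invertibility of [1 + T] when [qtnorm_s T < 1] *)

Section QTensorScale.
Variables (R : realType) (n m : nat).
Local Notation qt := (sqtensor R n m).

Definition qtscale (x : R) (A : qt) : qt := fun i j s => qscale x (A i j s).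

Lemma qtscale_mulr x (A B : qt) : A * qtscale x B = qtscale x (A * B).
Proof.
apply: qtensorP => i l s; rewrite /qtscale /= /qtprod /tfold /qmx_mul qscale_sum.
by apply: eq_bigr => u _; rewrite qmul_scaler.
Qed.

Local Notation idx := ('I_n * 'I_n * 'I_m.+1)%type.
Local Notation V := {ffun idx -> (R^o * R^o * R^o * R^o)%type}.

Let enc (A : qt) : V := [ffun u => A u.1.1 u.1.2 u.2].
Let dec (w : V) : qt := fun i j s => w (i, j, s).

Let encK : cancel enc dec.
Proof. by move=> A; apply: qtensorP => i j s; rewrite /dec /enc ffunE. Qed.
Let decK : cancel dec enc.
Proof. by move=> w; apply/ffunP => -[[i j] s]; rewrite /dec /enc ffunE. Qed.

Section LinearSurjective.
Variable F : qt -> qt.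
Hypotheses (FD : {morph F : A B / A + B})
  (FZ : forall x A, F (qtscale x A) = qtscale x (F A)) (Finj : injective F).

Definition qtensor_coord_map (w : V) : V := enc (F (dec w)).

Let coord_map_linear : linear qtensor_coord_map.
Proof.
move=> x u w; rewrite /qtensor_coord_map.
have -> : dec (x *: u + w) = qtscale x (dec u) + dec w.
  by apply: qtensorP => i j s; rewrite /dec /qtscale /= !ffunE.
by rewrite FD FZ; apply/ffunP => t; rewrite !ffunE.
Qed.

HB.instance Definition _ :=
  GRing.isLinear.Build R V V *:%R qtensor_coord_map coord_map_linear.

Lemma qtensor_linear_inj_surj B : exists A, F A = B.
Proof.
pose f := linfun qtensor_coord_map.
have f_inj : lker f == 0%VS.
  apply/lker0P => u w; rewrite !lfunE /= /qtensor_coord_map.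
  by move=> /(can_inj encK)/Finj/(can_inj decK).
exists (dec (f^-1%VF (enc B))); apply: (can_inj encK).
by have := lker0_lfunVK f_inj (enc B); rewrite lfunE.
Qed.

End LinearSurjective.

End QTensorScale.

Lemma qtensor_lreg_inverse (R : realType) (n m : nat) (u : sqtensor R n m) :
  GRing.lreg u -> exists v, is_inverse u v.
Proof.
move=> u_reg.
have [v uv] :=
  qtensor_linear_inj_surj (mulrDr u) (fun x => qtscale_mulr x u) u_reg 1.
by exists v; split => //; apply: u_reg; rewrite mulrA uv mul1r mulr1.
Qed.

Lemma qtnorm_s_lt1_inverse (R : realType) (n m : nat) (T : sqtensor R n m) :
  qtnorm_s T < 1 -> exists v, is_inverse (1 + T) v.
Proof.
move=> T_lt1; apply: qtensor_lreg_inverse => X Y eqXY; apply/eqP; rewrite -subr_eq0.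
have D0 : (1 + T) * (X - Y) = 0 by rewrite mulrBr eqXY subrr.
apply/eqP/qtensorP => i l s.
(* Each column of [tunfold (X - Y)] is sent to its opposite by [bcirc_z T]. *)
apply: (qmx_norm2_lt1_eq0 T_lt1 (x := fun u => (X - Y) u.2 l u.1) _ (s, i)).
move=> [s' i'].
by have := congr1 (fun Z : sqtensor R n m => Z i' l s') D0; rewrite mulrDl mul1r.
Qed.

Lemma QTdrazin_drazin_inverse (R : realType) (n m k : nat) (A X : sqtensor R n m) :
  QTdrazin A k X -> drazin_inverse k A X.
Proof. by rewrite /QTdrazin qtpowE. Qed.

Unset Implicit Arguments. Set Strict Implicit.
Local Open Scope qt_scope.

Theorem corollary4p5 (R : realType) (n n3 k kB : nat)
    (A E AD BD : qtensor R n n n3) :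
  QTindex A k -> QTdrazin A k AD ->
  E = A *Q AD *Q E *Q A *Q AD ->
  QTindex (A +Q E) kB -> QTdrazin (A +Q E) kB BD ->
  qtnorm_s (AD *Q E) < 1 ->
  [/\ A *Q AD = (A +Q E) *Q BD,
      BD -Q AD = qtopp (BD *Q E *Q AD),
      BD -Q AD = qtopp (AD *Q E *Q BD),
      (exists M, qtinverse (@qtid R n n3 +Q AD *Q E) M /\ BD = M *Q AD) &
      (exists M, qtinverse (@qtid R n n3 +Q E *Q AD) M /\ BD = AD *Q M)].
Proof.
move=> _ A_AD E_eq _ B_BD AD_E_lt1.
case: n3 A E AD BD A_AD E_eq B_BD AD_E_lt1 => [|m] A E AD BD A_AD E_eq B_BD AD_E_lt1.
  have all_eq (X Y : qtensor R n n 0) : X = Y.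
    by do 2!apply: funext => ?; apply: funext => -[].
  by split; try (exists BD; split; [split|]); apply: all_eq.
have [v inv_v] := qtnorm_s_lt1_inverse AD_E_lt1.
have [P_eq BD_sub1 BD_sub2 BD_v BD_w] := drazin_inverse_perturbation
  (QTdrazin_drazin_inverse A_AD) E_eq inv_v (QTdrazin_drazin_inverse B_BD).
split=> //; first by exists v.
exists (1 - (E : sqtensor R n m) * v * AD); split=> //.
exact: is_inverse_1addMC inv_v.
Qed.
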